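(* Let $R$ be a commutative ring and $\mathbf n=(n_1,\dots,n_s)$ positive integers with $\sum n_i=n$. Then $H^i(\mathcal{P}_{\mathbf n}(R),\mathrm{M}_n(R)/\mathcal{P}_{\mathbf n}(R))=0$ for all $i\ge0$.
   Context: $\mathcal{P}_{\mathbf n}(R)=\{(a_{ij})\in\mathrm{M}_n(R)\mid a_{ij}=0 \text{ if } \sum_{k\le t}n_k<i\le\sum_{k\le t+1}n_k \text{ and } j\le\sum_{k\le t}n_k\}$, the block upper triangular matrices with diagonal blocks of sizes $n_1,\dots,n_s$. $H^i$ is Hochschild cohomology; $\mathrm{M}_n(R)/\mathcal{P}_{\mathbf n}(R)$ is a bimodule via matrix multiplication. *)

From HB Require Import structures.
From mathcomp Require Import all_boot all_order all_algebra.
Set Implicit Arguments. Unset Strict Implicit. Unset Printing Implicit Defensive.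
Import Order.TTheory GRing.Theory Num.Theory.
Local Open Scope ring_scope.

(* Hochschild cohomology of an R-algebra A (given as a predicate on an  *)
(* R-module T, closed under mulA) with coefficients in an A-bimodule M  *)
(* (given as a predicate on an R-module U, with actions lact / ract).   *)
(* An i-cochain is an R-multilinear map A^i -> M; we represent tuples   *)
(* (a_0,...,a_{i-1}) as functions nat -> T, and require the cochain to  *)
(* depend only on the first i arguments.                                *)
Section Hochschild.
Variables (R : comPzRingType) (T U : lmodType R).
Variables (mulA : T -> T -> T) (A : pred T) (M : pred U).
Variables (lact : T -> U -> U) (ract : U -> T -> U).

Definition setarg (a : nat -> T) (j : nat) (x : T) : nat -> T :=
  fun k => if k == j then x else a k.

Definition inA (i : nat) (a : nat -> T) : Prop := forall k, (k < i)%N -> a k \in A.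

Definition hcochain (i : nat) (f : (nat -> T) -> U) : Prop :=
  [/\ (forall a b, (forall k, (k < i)%N -> a k = b k) -> f a = f b),
      (forall a, inA i a -> f a \in M) &
      (forall a j x y (r : R), (j < i)%N -> inA i a -> x \in A -> y \in A ->
         f (setarg a j (r *: x + y)) = r *: f (setarg a j x) + f (setarg a j y))].

Definition hcobound (i : nat) (f : (nat -> T) -> U) (a : nat -> T) : U :=
  lact (a 0%N) (f (fun k => a k.+1))
  + \sum_(j < i) (-1) ^+ j.+1 *:
       f (fun k => if (k < j)%N then a k
                   else if k == j then mulA (a j) (a j.+1) else a k.+1)
  + (-1) ^+ i.+1 *: ract (f a) (a i).

Definition HH_vanishes (i : nat) : Prop :=
  match i with
  | 0 => forall m, m \in M -> (forall a, a \in A -> lact a m = ract m a) -> m = 0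
  | j.+1 => forall f, hcochain j.+1 f ->
              (forall a, inA j.+2 a -> hcobound j.+1 f a = 0) ->
              exists g, hcochain j g /\ (forall a, inA j.+1 a -> f a = hcobound j g a)
  end.
End Hochschild.

Section Blocks.
Variables (R : comPzRingType) (n : nat) (ns : seq nat).

Definition cum (t : nat) : nat := sumn (take t ns).

(* (i,j) (0-based) lies in the forced-zero region of P_n:
   sum_{k<=t} n_k < i+1 <= sum_{k<=t+1} n_k and j+1 <= sum_{k<=t} n_k *)
Definition blkzero (i j : 'I_n) : bool :=
  [exists t : 'I_(size ns), [&& (cum t <= i)%N, (i < cum t.+1)%N & (j < cum t)%N]].

Definition Pn : pred 'M[R]_n :=
  [pred B : 'M[R]_n | [forall i, forall j, blkzero i j ==> (B i j == 0)]].

(* M_n(R)/P_n(R) is modelled by its canonical complement: matrices supported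
   on the forced-zero region; proj is the quotient map (kernel = P_n). *)
Definition Qn : pred 'M[R]_n :=
  [pred B : 'M[R]_n | [forall i, forall j, ~~ blkzero i j ==> (B i j == 0)]].

Definition projQ (B : 'M[R]_n) : 'M[R]_n :=
  \matrix_(i, j) if blkzero i j then B i j else 0.

Definition lactQ (a m : 'M[R]_n) : 'M[R]_n := projQ (a *m m).
Definition ractQ (m a : 'M[R]_n) : 'M[R]_n := projQ (m *m a).
End Blocks.

From HB Require Import structures.
From mathcomp Require Import all_boot all_order all_algebra.
From Stdlib Require Import FunctionalExtensionality.
From mathcomp Require Import zify.
Set Implicit Arguments. Unset Strict Implicit. Unset Printing Implicit Defensive.
Import Order.TTheory GRing.Theory Num.Theory.
Local Open Scope ring_scope.

(* The proof goes through an abstract criterion.  Let A be an R-algebra with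
   a complete family e_0, ..., e_(s-1) of orthogonal idempotents which is
   upper triangular (e_u A e_v = 0 for v < u), and let M be an A-bimodule,
   unital for the e_t, which is strictly lower triangular
   (e_t M e_u = 0 for t <= u).  Then H^i(A, M) = 0 for every i:
   - in degree 0, an invariant m splits as the sum of the e_u m e_t, each of
     which is killed either by triangularity of M or by orthogonality;
   - in degree i+1, for a cocycle F let K_j F (j <= i) be the i-cochain
       b |-> sum_(t_0..t_j) e_t0 F(e_t0 b_0 e_t1, .., e_t(j-1) b_(j-1) e_tj,
                                   e_tj, b_j, .., b_(i-1)),
     obtained by cutting the first j arguments along the idempotents and
     inserting one in position j.  Evaluating the cocycle identity on these
     arguments gives relations that telescope to F = d(sum_j (-1)^j K_j F);
     the only left-over term is a corner e_t0 (..) e_t(i+1) which vanishes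
     by the two triangularity conditions. *)

(* Maps f with f (r x + y) = r f x + f y are additive and commute with sums;
   all the bilinear operations below are given by such hypotheses. *)
Section Semilinear.
Variables (R : pzRingType) (V W : lmodType R) (f : V -> W).
Hypothesis f_lin : forall r x y, f (r *: x + y) = r *: f x + f y.

Lemma lin0 : f 0 = 0.
Proof.
have h := f_lin 1 0 0; rewrite !scale1r addr0 in h.
by apply: (addrI (f 0)); rewrite -h addr0.
Qed.

Lemma linD x y : f (x + y) = f x + f y.
Proof. by rewrite -(scale1r x) f_lin !scale1r. Qed.

Lemma linZ r x : f (r *: x) = r *: f x.
Proof. by rewrite -(addr0 (r *: x)) f_lin lin0 addr0. Qed.

Lemma lin_sum (I : Type) (r : seq I) (P : pred I) (g : I -> V) :
  f (\sum_(i <- r | P i) g i) = \sum_(i <- r | P i) f (g i).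
Proof. by elim/big_rec2: _ => [|i y1 y2 _ <-]; [exact: lin0 | exact: linD]. Qed.
End Semilinear.

(* Tuples of arguments are functions nat -> T; besides [setarg] we need
   dropping the first argument, multiplying two neighbours together (the
   face maps of the Hochschild complex) and inserting a new argument. *)
Section ArgumentTuples.
Variables (R : comPzRingType) (T : lmodType R) (mul : T -> T -> T).

Definition shiftarg (b : nat -> T) : nat -> T := fun k => b k.+1.

Definition mergearg (l : nat) (b : nat -> T) : nat -> T :=
  fun k => if (k < l)%N then b k else if k == l then mul (b l) (b l.+1) else b k.+1.

Definition insarg (j : nat) (x : T) (b : nat -> T) : nat -> T :=
  fun k => if (k < j)%N then b k else if k == j then x else b k.-1.

Local Ltac args_ext := apply: functional_extensionality => ?;
  rewrite /setarg /mergearg /insarg /shiftarg;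
  repeat match goal with |- context[if ?c then _ else _] => case: (boolP c) => ? end;
  try (by []); try (by exfalso; lia);
  try (match goal with |- ?b ?x = ?b ?y => (have -> : x = y by lia) end; by []);
  try (match goal with |- ?f (?b ?x) (?b ?y) = ?f (?b ?x') (?b ?y') =>
       (have -> : x = x' by lia); (have -> : y = y' by lia) end; by []).

Lemma setargC (b : nat -> T) j k x y : j != k ->
  setarg (setarg b j x) k y = setarg (setarg b k y) j x.
Proof. move=> ?; args_ext. Qed.

Lemma setargK (b : nat -> T) j x y : setarg (setarg b j x) j y = setarg b j y.
Proof. args_ext. Qed.

Lemma setargE (b : nat -> T) j x : setarg b j x j = x.
Proof. by rewrite /setarg eqxx. Qed.

Lemma setargN (b : nat -> T) j k x : k != j -> setarg b j x k = b k.
Proof. by rewrite /setarg => /negbTE ->. Qed.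

Lemma shift_setarg0 (b : nat -> T) x : shiftarg (setarg b 0 x) = shiftarg b.
Proof. args_ext. Qed.

Lemma shift_setargS (b : nat -> T) j x :
  shiftarg (setarg b j.+1 x) = setarg (shiftarg b) j x.
Proof. args_ext. Qed.

Lemma merge_setarg_lo (b : nat -> T) l k x : (k < l)%N ->
  mergearg l (setarg b k x) = setarg (mergearg l b) k x.
Proof. move=> ?; args_ext. Qed.

Lemma merge_setarg_hi l d x (b : nat -> T) :
  mergearg l (setarg b (l.+2 + d) x) = setarg (mergearg l b) (l.+1 + d) x.
Proof. args_ext. Qed.

Lemma merge_setarg2 (b : nat -> T) l x y :
  mergearg l (setarg (setarg b l x) l.+1 y) = setarg (mergearg l b) l (mul x y).
Proof. args_ext. Qed.

Lemma merge_lo (b : nat -> T) l k : (k < l)%N -> mergearg l b k = b k.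
Proof. by move=> hk; rewrite /mergearg hk. Qed.

Lemma shift_ins j x (b : nat -> T) : shiftarg (insarg j.+1 x b) = insarg j x (shiftarg b).
Proof. args_ext. Qed.

Lemma shift_ins0 x (b : nat -> T) : shiftarg (insarg 0 x b) = b.
Proof. args_ext. Qed.

Lemma merge_ins_lo l j x (b : nat -> T) : (l.+1 < j)%N ->
  mergearg l (insarg j x b) = insarg j.-1 x (mergearg l b).
Proof. move=> ?; args_ext. Qed.

Lemma merge_ins_left j x (b : nat -> T) :
  mergearg j (insarg j.+1 x b) = setarg b j (mul (b j) x).
Proof. args_ext. Qed.

Lemma merge_ins_right j x (b : nat -> T) :
  mergearg j (insarg j x b) = setarg b j (mul x (b j)).
Proof. args_ext. Qed.

Lemma merge_ins_hi l j x (b : nat -> T) : (j < l)%N ->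
  mergearg l (insarg j x b) = insarg j x (mergearg l.-1 b).
Proof. move=> ?; args_ext. by have -> : l.+1.-1 = l.-1.+1 by lia. Qed.

Lemma ins_setarg_lo j k x z (b : nat -> T) : (k < j)%N ->
  insarg j x (setarg b k z) = setarg (insarg j x b) k z.
Proof. move=> ?; args_ext. Qed.

Lemma ins_setarg_hi j k x z (b : nat -> T) : (j <= k)%N ->
  insarg j x (setarg b k z) = setarg (insarg j x b) k.+1 z.
Proof. move=> ?; args_ext. Qed.
End ArgumentTuples.

Section TriangularHochschild.
Variables (R : comPzRingType) (T U : lmodType R).
Variables (mul : T -> T -> T) (A : pred T) (M : pred U).
Variables (lact : T -> U -> U) (ract : U -> T -> U).
Variables (s : nat) (e : 'I_s -> T).

Hypothesis mul_linl : forall r x y z, mul (r *: x + y) z = r *: mul x z + mul y z.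
Hypothesis mul_linr : forall r x y z, mul x (r *: y + z) = r *: mul x y + mul x z.
Hypothesis mul_assoc : forall x y z, mul (mul x y) z = mul x (mul y z).
Hypothesis A_mul : forall x y, x \in A -> y \in A -> mul x y \in A.
Hypothesis A_lin : forall r x y, x \in A -> y \in A -> r *: x + y \in A.
Hypothesis A0 : 0 \in A.
Hypothesis e_in_A : forall t, e t \in A.
Hypothesis e_orth : forall t u, mul (e t) (e u) = if t == u then e t else 0.
Hypothesis e_suml : forall x, \sum_t mul (e t) x = x.
Hypothesis e_sumr : forall x, \sum_t mul x (e t) = x.
Hypothesis e_upper : forall x (u v : 'I_s), x \in A -> (v < u)%N ->
  mul (mul (e u) x) (e v) = 0.
Hypothesis lact_linl : forall r x y m, lact (r *: x + y) m = r *: lact x m + lact y m.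
Hypothesis lact_linr : forall r x m m', lact x (r *: m + m') = r *: lact x m + lact x m'.
Hypothesis ract_linl : forall r m m' x, ract (r *: m + m') x = r *: ract m x + ract m' x.
Hypothesis ract_linr : forall r m x y, ract m (r *: x + y) = r *: ract m x + ract m y.
Hypothesis lact_mul : forall x y m, x \in A -> lact x (lact y m) = lact (mul x y) m.
Hypothesis ract_mul : forall m x y, y \in A -> ract (ract m x) y = ract m (mul x y).
Hypothesis lact_ractC : forall x m y, x \in A -> y \in A ->
  lact x (ract m y) = ract (lact x m) y.
Hypothesis lact_in_M : forall x m, lact x m \in M.
Hypothesis ract_in_M : forall m x, ract m x \in M.
Hypothesis M0 : 0 \in M.
Hypothesis M_lin : forall r m m', m \in M -> m' \in M -> r *: m + m' \in M.
Hypothesis e_lact_sum : forall m, m \in M -> \sum_t lact (e t) m = m.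
Hypothesis e_corner : forall m (t u : 'I_s), m \in M -> (t <= u)%N ->
  lact (e t) (ract m (e u)) = 0.

Let inA := inA A.

Lemma mul_suml I (r : seq I) (P : pred I) g z :
  mul (\sum_(i <- r | P i) g i) z = \sum_(i <- r | P i) mul (g i) z.
Proof. exact: (lin_sum (f := mul^~ z)). Qed.

Lemma lact_suml I (r : seq I) (P : pred I) g m :
  lact (\sum_(i <- r | P i) g i) m = \sum_(i <- r | P i) lact (g i) m.
Proof. exact: (lin_sum (f := lact^~ m)). Qed.

Lemma lact_sumr I (r : seq I) (P : pred I) g z :
  lact z (\sum_(i <- r | P i) g i) = \sum_(i <- r | P i) lact z (g i).
Proof. exact: (lin_sum (f := lact z)). Qed.

Lemma ract_suml I (r : seq I) (P : pred I) g z :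
  ract (\sum_(i <- r | P i) g i) z = \sum_(i <- r | P i) ract (g i) z.
Proof. exact: (lin_sum (f := ract^~ z)). Qed.

Lemma lact0 x : lact x 0 = 0.
Proof. exact: (lin0 (f := lact x)). Qed.

Lemma ract0 m : ract m 0 = 0.
Proof. exact: (lin0 (f := ract m)). Qed.

Lemma ract0l x : ract 0 x = 0.
Proof. exact: (lin0 (f := ract^~ x)). Qed.

Lemma sandwich_in_A u v x : x \in A -> mul (mul (e u) x) (e v) \in A.
Proof. by move=> hx; apply: A_mul => //; apply: A_mul. Qed.

Lemma inA_setarg N b k x : inA N b -> ((k < N)%N -> x \in A) -> inA N (setarg b k x).
Proof.
move=> hb hx m hm; rewrite /setarg; case: (m =P k) => [Emk|_]; last exact: hb.
by apply: hx; rewrite -Emk.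
Qed.

Lemma inA_merge N l b : inA N.+1 b -> inA N (mergearg mul l b).
Proof.
move=> hb k hk; rewrite /mergearg; case: ifP => h1; first by apply: hb; lia.
case: eqP => h2; last by apply: hb; lia.
by subst k; apply: A_mul; apply: hb; lia.
Qed.

Lemma inA_ins N j x b : (j <= N)%N -> inA N b -> x \in A -> inA N.+1 (insarg j x b).
Proof.
move=> hj hb hx k hk; rewrite /insarg; case: ifP => h1; first by apply: hb; lia.
by case: eqP => h2 //; apply: hb; lia.
Qed.

Definition multilinear_at N k (G : (nat -> T) -> U) :=
  forall b r x y, inA N b -> x \in A -> y \in A ->
  G (setarg b k (r *: x + y)) = r *: G (setarg b k x) + G (setarg b k y).

Lemma multilinear_at0 N k G b : multilinear_at N k G -> inA N b -> G (setarg b k 0) = 0.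
Proof.
move=> hG hb; have := hG b 1 0 0 hb A0 A0; rewrite !scale1r addr0 => h.
by apply: (addrI (G (setarg b k 0))); rewrite -h addr0.
Qed.

Lemma multilinear_at_sum N k G b I (r : seq I) (P : pred I) (x : I -> T) :
  multilinear_at N k G -> inA N b -> (forall i, x i \in A) ->
  G (setarg b k (\sum_(i <- r | P i) x i)) = \sum_(i <- r | P i) G (setarg b k (x i)).
Proof.
move=> hG hb hx.
have sumA r' : \sum_(i <- r' | P i) x i \in A.
  elim/big_rec: _ => // i y _ hy; rewrite -(scale1r (x i)); exact: A_lin.
elim: r => [|y r IH]; first by rewrite !big_nil (multilinear_at0 hG hb).
rewrite !big_cons; case: ifP => _ //.
by rewrite -IH -{1}(scale1r (x y)) hG // scale1r.
Qed.

(* For a family H_t of functions of tuples,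
     sandwich j H b = sum_(t_0..t_j) e_t0 . H_tj (e_t0 b_0 e_t1, ..,
                                               e_t(j-1) b_(j-1) e_tj, b_j, ..),
   defined by peeling one argument at a time: each step cuts argument j
   between the idempotent carried so far and a fresh one. *)
Definition sandwich_step j (H : 'I_s -> (nat -> T) -> U) : 'I_s -> (nat -> T) -> U :=
  fun u b => \sum_v H v (setarg b j (mul (mul (e u) (b j)) (e v))).

Fixpoint sandwich (j : nat) (H : 'I_s -> (nat -> T) -> U) (b : nat -> T) : U :=
  if j is j'.+1 then sandwich j' (sandwich_step j' H) b
  else \sum_t lact (e t) (H t b).

Lemma sandwichS j H b : sandwich j.+1 H b = sandwich j (sandwich_step j H) b.
Proof. by []. Qed.

Lemma sandwich_eq j H1 H2 b :
  (forall t b', H1 t b' = H2 t b') -> sandwich j H1 b = sandwich j H2 b.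
Proof.
move=> h; congr sandwich; apply: functional_extensionality => t.
exact: functional_extensionality.
Qed.

Lemma sandwich_ext N j H1 H2 b :
  (forall t b', inA N b' -> H1 t b' = H2 t b') -> inA N b ->
  sandwich j H1 b = sandwich j H2 b.
Proof.
elim: j H1 H2 => [|j IH] H1 H2 hH hb /=.
  by apply: eq_bigr => t _; rewrite hH.
apply: IH => // u b' hb'; apply: eq_bigr => v _; apply: hH.
by apply: inA_setarg => // hj; apply: sandwich_in_A; apply: hb'.
Qed.

Lemma sandwich_lin j r H1 H2 b :
  sandwich j (fun t b => r *: H1 t b + H2 t b) b = r *: sandwich j H1 b + sandwich j H2 b.
Proof.
elim: j H1 H2 => [|j IH] H1 H2 /=.
  by rewrite scaler_sumr -big_split; apply: eq_bigr => t _; rewrite lact_linr.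
rewrite -IH; apply: sandwich_eq => u b'.
by rewrite /sandwich_step scaler_sumr -big_split.
Qed.

Lemma sandwich0 j b : sandwich j (fun _ _ => 0) b = 0.
Proof.
elim: j => [|j IH] /=; first by rewrite big1 // => t _; exact: lact0.
by rewrite -[RHS]IH; apply: sandwich_eq => u b'; rewrite /sandwich_step big1.
Qed.

Lemma sandwich_add j H1 H2 b :
  sandwich j (fun t b => H1 t b + H2 t b) b = sandwich j H1 b + sandwich j H2 b.
Proof.
rewrite -(scale1r (sandwich j H1 b)) -sandwich_lin.
by apply: sandwich_eq => t b'; rewrite scale1r.
Qed.

Lemma sandwich_scale j r H b :
  sandwich j (fun t b => r *: H t b) b = r *: sandwich j H b.
Proof.
rewrite -[RHS]addr0 -(sandwich0 j b) -sandwich_lin.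
by apply: sandwich_eq => t b'; rewrite addr0.
Qed.

Lemma sandwich_sum j I (r : seq I) (P : pred I) (H : I -> 'I_s -> (nat -> T) -> U) b :
  sandwich j (fun t b => \sum_(i <- r | P i) H i t b) b
  = \sum_(i <- r | P i) sandwich j (H i) b.
Proof.
elim: r => [|x r IH].
  by rewrite big_nil -[RHS](sandwich0 j b); apply: sandwich_eq => t b'; rewrite big_nil.
rewrite big_cons; case: ifP => Px; rewrite -IH; last first.
  by apply: sandwich_eq => t b'; rewrite big_cons Px.
by rewrite -sandwich_add; apply: sandwich_eq => t b'; rewrite big_cons Px.
Qed.

Lemma sandwich_step_multilinear N j k H :
  (forall t, multilinear_at N k (H t)) ->
  forall u, multilinear_at N k (sandwich_step j H u).
Proof.
move=> hH u b r x y hb hx hy; rewrite /sandwich_step scaler_sumr -big_split.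
apply: eq_bigr => v _; case: (eqVneq j k) => [ejk|hjk].
  subst k; rewrite !setargE !setargK mul_linr mul_linl hH //; exact: sandwich_in_A.
have hkj : k != j by rewrite eq_sym.
rewrite !(setargN _ _ hjk) !(setargC _ _ _ hkj) hH //.
by apply: inA_setarg => // hj; apply: sandwich_in_A; apply: hb.
Qed.

Lemma sandwich_multilinear N k j H :
  (forall t, multilinear_at N k (H t)) -> multilinear_at N k (sandwich j H).
Proof.
elim: j H => [|j IH] H hH; last first.
  by apply: IH => //; exact: sandwich_step_multilinear.
move=> b r x y hb hx hy /=; rewrite scaler_sumr -big_split.
by apply: eq_bigr => t _; rewrite hH // lact_linr.
Qed.

Lemma sandwich_dep N j H b1 b2 :
  (forall t c1 c2, (forall k, (k < N)%N -> c1 k = c2 k) -> H t c1 = H t c2) ->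
  (forall k, (k < N)%N -> b1 k = b2 k) -> sandwich j H b1 = sandwich j H b2.
Proof.
elim: j H => [|j IH] H hH hb /=; first by apply: eq_bigr => t _; rewrite (hH t b1 b2).
apply: IH => // u c1 c2 hc; apply: eq_bigr => v _; apply: hH => k hk.
rewrite /setarg; case: (k =P j) => [ekj|_]; last exact: hc.
by subst k; rewrite hc.
Qed.

Lemma sandwich_tail j (phi : (nat -> T) -> nat -> T) G a :
  (forall b k x, (k < j)%N -> phi (setarg b k x) = setarg (phi b) k x) ->
  (forall b k, (k < j)%N -> phi b k = b k) ->
  sandwich j (fun t b => G t (phi b)) a = sandwich j G (phi a).
Proof.
elim: j G => [|j IH] G h1 h2 //=.
transitivity (sandwich j (fun u b => sandwich_step j G u (phi b)) a).
  by apply: sandwich_eq => u b; rewrite /sandwich_step; apply: eq_bigr => v _;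
     rewrite h1 // h2.
apply: IH => [b k x hk|b k hk]; [apply: h1 | apply: h2]; exact: ltnW.
Qed.

Lemma sandwich_ract j G a p : (j <= p)%N -> a p \in A ->
  sandwich j (fun t b => ract (G t b) (b p)) a = ract (sandwich j G a) (a p).
Proof.
elim: j G => [|j IH] G hjp hap /=.
  by rewrite ract_suml; apply: eq_bigr => t _; rewrite lact_ractC.
rewrite -IH 1?ltnW //; apply: sandwich_eq => u b.
rewrite /sandwich_step ract_suml; apply: eq_bigr => v _.
by rewrite setargN // neq_ltn hjp orbT.
Qed.

(* Cutting the first argument of a left action b_0 . G(b_1, ..) amounts to
   cutting the remaining ones, by completeness of the idempotents. *)
Lemma sandwich_lact j G a : a 0%N \in A ->
  sandwich j.+1 (fun t b => lact (b 0%N) (G t (shiftarg b))) a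
  = lact (a 0%N) (sandwich j G (shiftarg a)).
Proof.
move=> ha0; elim: j G => [|j IH] G; last first.
  rewrite [LHS]sandwichS [in RHS]sandwichS -IH; apply: sandwich_eq => u b.
  rewrite /sandwich_step lact_sumr; apply: eq_bigr => v _.
  by rewrite setargN // shift_setargS.
rewrite /= /sandwich_step lact_sumr.
transitivity (\sum_u \sum_v lact (mul (mul (e u) (a 0%N)) (e v)) (G v (shiftarg a))).
  apply: eq_bigr => u _; rewrite lact_sumr; apply: eq_bigr => v _.
  by rewrite setargE shift_setarg0 lact_mul // -!mul_assoc e_orth eqxx.
rewrite exchange_big; apply: eq_bigr => v _.
by rewrite -lact_suml -mul_suml e_suml -lact_mul.
Qed.

(* Multiplying argument j on the right by the idempotent e_tj is absorbed
   when argument j is cut as well ... *)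
Lemma sandwich_last j G a :
  sandwich j.+1 (fun t b => G (setarg b j (mul (b j) (e t)))) a
  = sandwich j.+1 (fun _ b => G b) a.
Proof.
rewrite !sandwichS; apply: sandwich_eq => u b; apply: eq_bigr => v _.
by rewrite setargK setargE mul_assoc e_orth eqxx.
Qed.

(* ... while multiplying it on the left by e_tj amounts to cutting it. *)
Lemma sandwich_next N j G a : (j < N)%N -> multilinear_at N j G -> inA N a ->
  sandwich j (fun t b => G (setarg b j (mul (e t) (b j)))) a
  = sandwich j.+1 (fun _ b => G b) a.
Proof.
move=> hj hG ha; apply: (sandwich_ext (N := N)) => // u b hb.
rewrite /sandwich_step -(multilinear_at_sum _ _ hG hb) ?e_sumr // => v.
by apply: sandwich_in_A; apply: hb.
Qed.

Lemma sum_mid X Y : \sum_u mul (mul X (e u)) (mul (e u) Y) = mul X Y.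
Proof.
transitivity (\sum_u mul X (mul (e u) Y)).
  by apply: eq_bigr => u _; rewrite mul_assoc -(mul_assoc (e u)) e_orth eqxx.
by rewrite -(lin_sum (fun r => mul_linr r X)) e_suml.
Qed.

Lemma sandwich_merge N l d G a :
  (l < N)%N -> (forall t, multilinear_at N l (G t)) -> inA N.+1 a ->
  sandwich (l.+2 + d) (fun t b => G t (mergearg mul l b)) a
  = sandwich (l.+1 + d) G (mergearg mul l a).
Proof.
move=> hl hG ha; elim: d G hG => [|d IH] G hG; last first.
  rewrite !addnS [LHS]sandwichS [in RHS]sandwichS -IH; last first.
    by move=> t; exact: sandwich_step_multilinear.
  apply: sandwich_eq => u b; rewrite /sandwich_step; apply: eq_bigr => v _.
  rewrite merge_setarg_hi; congr (G v (setarg _ _ (mul (mul _ _) _))).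
  by rewrite /mergearg; case: ifP => ?; [lia | case: eqP => ?; [lia | rewrite addSn]].
rewrite !addn0 !sandwichS.
transitivity (sandwich l (fun w b => sandwich_step l G w (mergearg mul l b)) a); last first.
  by apply: sandwich_tail => [b k x hk|b k hk]; [exact: merge_setarg_lo | exact: merge_lo].
apply: (sandwich_ext (N := N.+1)) => // w b hb; rewrite /sandwich_step.
transitivity (\sum_u \sum_v G v (setarg (mergearg mul l b) l
     (mul (mul (mul (e w) (b l)) (e u)) (mul (mul (e u) (b l.+1)) (e v))))).
  apply: eq_bigr => u _; apply: eq_bigr => v _.
  by rewrite setargN ?merge_setarg2 // neq_ltn ltnSn orbT.
rewrite exchange_big; apply: eq_bigr => v _.
rewrite -(multilinear_at_sum _ _ (hG v) (inA_merge l hb)); last first.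
  by move=> u; apply: A_mul; apply: sandwich_in_A; apply: hb; lia.
congr (G v (setarg _ l _)); under eq_bigr => u _ do rewrite (mul_assoc (e u)).
by rewrite sum_mid /mergearg ltnn eqxx !mul_assoc.
Qed.

Lemma sandwich_in_M j H b : sandwich j H b \in M.
Proof.
elim: j H => [|j IH] H //=; elim/big_rec: _ => // t x _ hx.
by rewrite -(scale1r (lact _ _)); apply: M_lin.
Qed.

(* The corner estimate: if H vanishes as soon as one of the first j
   arguments is 0, and e_t0 H_t = 0 for t0 <= t, then [sandwich j H] = 0.
   Indeed a non-zero term needs t_0 <= t_1 <= .. <= t_j by upper
   triangularity, and then the corner condition kills it. *)
Lemma sandwich_corner N j H a : (j <= N)%N -> inA N a ->
  (forall k (t : 'I_s) b, (k < j)%N -> inA N b -> H t (setarg b k 0) = 0) ->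
  (forall (t0 t : 'I_s) b, (t0 <= t)%N -> inA N b -> lact (e t0) (H t b) = 0) ->
  sandwich j H a = 0.
Proof.
move=> hjN ha; elim: j H hjN => [|j IH] H hjN hz hc /=.
  by rewrite big1 // => t _; apply: hc.
have hbA u v b : inA N b -> inA N (setarg b j (mul (mul (e u) (b j)) (e v))).
  by move=> hb; apply: inA_setarg => // hj; apply: sandwich_in_A; apply: hb.
apply: IH; first exact: ltnW.
  move=> k u b hk hb; rewrite /sandwich_step big1 // => v _.
  have hkj : k != j by rewrite neq_ltn hk.
  by rewrite setargN 1?eq_sym // setargC // hz //; by [apply: ltnW | apply: hbA].
move=> t0 u b htu hb; rewrite /sandwich_step lact_sumr big1 // => v _.
case: (ltnP v u) => hvu; last by apply: hc; [exact: leq_trans htu hvu | exact: hbA].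
by rewrite e_upper ?hz ?lact0 //; apply: hb.
Qed.

Lemma sign_scaleS k (v : U) : (-1) ^+ k.+1 *: v = - ((-1) ^+ k *: v).
Proof. by rewrite exprS mulN1r scaleNr. Qed.

Lemma sign_scaleK k (v : U) : (-1) ^+ k *: ((-1) ^+ k *: v) = v.
Proof. by rewrite scalerA -expr2 -exprM mulnC exprM sqrrN !expr1n scale1r. Qed.

Section Contraction.
Variables (m : nat) (F : (nat -> T) -> U).
Hypothesis F_cochain : hcochain A M m.+1 F.
Hypothesis F_cocycle : forall a, inA m.+2 a -> hcobound mul lact ract m.+1 F a = 0.

Lemma F_multilinear k : (k < m.+1)%N -> multilinear_at m.+1 k F.
Proof. by case: F_cochain => _ _ h hk b r x y hb hx hy; apply: h. Qed.

Lemma F_in_M b : inA m.+1 b -> F b \in M.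
Proof. by case: F_cochain => _ h _; apply: h. Qed.

Lemma F_dep b1 b2 : (forall k, (k < m.+1)%N -> b1 k = b2 k) -> F b1 = F b2.
Proof. by case: F_cochain => h _ _; apply: h. Qed.

(* The j-th part K_j F of the contracting homotopy: insert an idempotent in
   position j and cut the arguments before it. *)
Definition homotopy (j : nat) : (nat -> T) -> U :=
  sandwich j (fun t c => F (insarg j (e t) c)).

Lemma homotopy_multilinear j k : (j <= m)%N -> (k < m)%N -> multilinear_at m k (homotopy j).
Proof.
move=> hj hk; apply: sandwich_multilinear => t b r x y hb hx hy.
case: (ltnP k j) => hkj.
  rewrite !ins_setarg_lo //; apply: F_multilinear => //; [lia | exact: inA_ins].
rewrite !ins_setarg_hi //; apply: F_multilinear => //; exact: inA_ins.
Qed.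

Lemma homotopy_dep j b1 b2 : (j <= m)%N -> (forall k, (k < m)%N -> b1 k = b2 k) ->
  homotopy j b1 = homotopy j b2.
Proof.
move=> hj hb; apply: (sandwich_dep (N := m)) => // t c1 c2 hc; apply: F_dep => k hk.
rewrite /insarg; case: ifP => h1; first by apply: hc; lia.
by case: eqP => // h2; apply: hc; lia.
Qed.

Variable a : nat -> T.
Hypothesis a_in_A : inA m.+1 a.

(* F with its first j arguments cut; Fcut 0 = F a and the last one,
   Fcut (m+1), is what remains after the telescoping. *)
Definition Fcut j := sandwich j (fun _ b => F b) a.

Definition Fcorner := sandwich m.+1 (fun t b => ract (F b) (e t)) a.

(* The cocycle identity, evaluated at the arguments defining K_j F, and
   cut: it has a left-action term, m+1 face terms and a right-action term. *)
Lemma cocycle_cut j : (j <= m.+1)%N ->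
  sandwich j (fun t b => lact (insarg j (e t) b 0%N) (F (shiftarg (insarg j (e t) b)))) a
  + \sum_(l < m.+1) (-1) ^+ l.+1 *:
      sandwich j (fun t b => F (mergearg mul l (insarg j (e t) b))) a
  + (-1) ^+ m.+2 *:
      sandwich j (fun t b => ract (F (insarg j (e t) b)) (insarg j (e t) b m.+1)) a = 0.
Proof.
move=> hj.
have h : sandwich j (fun t b => hcobound mul lact ract m.+1 F (insarg j (e t) b)) a = 0.
  rewrite -(sandwich0 j a); apply: (sandwich_ext (N := m.+1)) => // t b hb.
  by apply: F_cocycle; apply: inA_ins.
rewrite -[RHS]h /hcobound !sandwich_add sandwich_sum sandwich_scale.
by congr (_ + _ + _); apply: eq_bigr => l _; rewrite sandwich_scale.
Qed.

Lemma left_term0 :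
  sandwich 0 (fun t b => lact (insarg 0 (e t) b 0%N) (F (shiftarg (insarg 0 (e t) b)))) a
  = F a.
Proof.
rewrite /= -[RHS](e_lact_sum (F_in_M a_in_A)); apply: eq_bigr => t _.
by rewrite shift_ins0 lact_mul // e_orth eqxx.
Qed.

Lemma left_termS j :
  sandwich j.+1
    (fun t b => lact (insarg j.+1 (e t) b 0%N) (F (shiftarg (insarg j.+1 (e t) b)))) a
  = lact (a 0%N) (homotopy j (shiftarg a)).
Proof.
rewrite -sandwich_lact; last exact: a_in_A.
by apply: sandwich_eq => t b; rewrite shift_ins.
Qed.

Lemma merge_term_lo l j : (l.+1 < j)%N -> (j <= m.+1)%N ->
  sandwich j (fun t b => F (mergearg mul l (insarg j (e t) b))) a
  = homotopy j.-1 (mergearg mul l a).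
Proof.
move=> hlj hjm; have [d ej] : exists d, j = (l.+2 + d)%N by exists (j - l.+2)%N; lia.
subst j.
have hF t : multilinear_at m l (fun c => F (insarg (l.+1 + d) (e t) c)).
  move=> c r x y hc hx hy; rewrite !ins_setarg_lo; try lia.
  apply: F_multilinear => //; [lia | apply: inA_ins => //; lia].
rewrite /homotopy -(sandwich_merge d _ hF a_in_A); last lia.
by apply: sandwich_eq => t b; rewrite merge_ins_lo //; lia.
Qed.

Lemma merge_term_left j :
  sandwich j.+1 (fun t b => F (mergearg mul j (insarg j.+1 (e t) b))) a = Fcut j.+1.
Proof. by rewrite /Fcut -sandwich_last; apply: sandwich_eq => t b; rewrite merge_ins_left. Qed.

Lemma merge_term_right j : (j < m.+1)%N ->
  sandwich j (fun t b => F (mergearg mul j (insarg j (e t) b))) a = Fcut j.+1.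
Proof.
move=> hj; rewrite /Fcut -(sandwich_next (N := m.+1)) //; last exact: F_multilinear.
by apply: sandwich_eq => t b; rewrite merge_ins_right.
Qed.

Lemma merge_term_hi l j : (j < l)%N ->
  sandwich j (fun t b => F (mergearg mul l (insarg j (e t) b))) a
  = homotopy j (mergearg mul l.-1 a).
Proof.
move=> hjl; rewrite /homotopy -sandwich_tail.
- by apply: sandwich_eq => t b; rewrite merge_ins_hi.
- by move=> b k x hk; apply: merge_setarg_lo; lia.
- by move=> b k hk; apply: merge_lo; lia.
Qed.

Lemma right_term j : (j <= m)%N ->
  sandwich j (fun t b => ract (F (insarg j (e t) b)) (insarg j (e t) b m.+1)) a
  = ract (homotopy j a) (a m).
Proof.
move=> hj; rewrite /homotopy -sandwich_ract //; last exact: a_in_A.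
apply: sandwich_eq => t b; congr (ract _ _).
by rewrite /insarg ltnNge ltnW //= gtn_eqF.
Qed.

Lemma right_term_top :
  sandwich m.+1 (fun t b => ract (F (insarg m.+1 (e t) b)) (insarg m.+1 (e t) b m.+1)) a
  = Fcorner.
Proof.
apply: sandwich_eq => t b; rewrite {2}/insarg ltnn eqxx; congr (ract _ _).
by apply: F_dep => k hk; rewrite /insarg hk.
Qed.

(* The left-over term vanishes: this is where triangularity is used. *)
Lemma Fcorner0 : Fcorner = 0.
Proof.
apply: (sandwich_corner (N := m.+1)) => // [k t b hk hb | t0 t b htt hb].
  by rewrite (multilinear_at0 (F_multilinear hk) hb) ract0l.
by rewrite e_corner // F_in_M.
Qed.

Definition dlow j :=
  lact (a 0%N) (homotopy j (shiftarg a))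
  + \sum_(0 <= l < j) (-1) ^+ l.+1 *: homotopy j (mergearg mul l a).

Definition dhigh j :=
  \sum_(j <= l < m) (-1) ^+ l.+1 *: homotopy j (mergearg mul l a)
  + (-1) ^+ m.+1 *: ract (homotopy j a) (a m).

Lemma hcobound_homotopy j : (j <= m)%N ->
  hcobound mul lact ract m (homotopy j) a = dlow j + dhigh j.
Proof.
move=> hj; rewrite /hcobound /dlow /dhigh.
rewrite -(big_mkord xpredT (fun l => (-1) ^+ l.+1 *: homotopy j (mergearg mul l a))).
by rewrite (big_cat_nat (leq0n j) hj) !addrA.
Qed.

(* The identities obtained from [cocycle_cut] for j = 0, 0 < j <= m and
   j = m+1: the high part of d(K_j F) is compensated by the low part of
   d(K_(j+1) F), up to the difference of two consecutive [Fcut]. *)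
Lemma relation0 : F a - Fcut 1 - dhigh 0 = 0.
Proof.
have h := cocycle_cut (leq0n m.+1); rewrite left_term0 right_term // in h.
rewrite -(big_mkord xpredT (fun l => (-1) ^+ l.+1 *:
   sandwich 0 (fun t b => F (mergearg mul l (insarg 0 (e t) b))) a)) in h.
rewrite big_ltn // big_add1 merge_term_right // in h.
have hi_faces : \sum_(0 <= l < m) (-1) ^+ l.+2 *:
    sandwich 0 (fun t b => F (mergearg mul l.+1 (insarg 0 (e t) b))) a
  = - \sum_(0 <= l < m) (-1) ^+ l.+1 *: homotopy 0 (mergearg mul l a).
  by rewrite -sumrN; apply: eq_bigr => l _; rewrite merge_term_hi // sign_scaleS.
rewrite hi_faces in h.
rewrite expr1 scaleN1r sign_scaleS in h.
by rewrite -[RHS]h /dhigh opprD !addrA.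
Qed.

Lemma relationS j : (j < m)%N ->
  dlow j + (-1) ^+ j.+1 *: (Fcut j.+1 - Fcut j.+2) - dhigh j.+1 = 0.
Proof.
move=> hjm; have hj1 : (j < m.+1)%N by lia.
have hj2 : (j.+1 < m.+1)%N by lia.
have h := cocycle_cut hj1; rewrite left_termS right_term // in h.
rewrite -(big_mkord xpredT (fun l => (-1) ^+ l.+1 *:
   sandwich j.+1 (fun t b => F (mergearg mul l (insarg j.+1 (e t) b))) a)) in h.
rewrite (big_cat_nat (leq0n j) (ltnW hj1)) (big_ltn hj1) (big_ltn hj2) in h.
rewrite merge_term_left merge_term_right // in h.
have lo_faces : \sum_(0 <= l < j) (-1) ^+ l.+1 *:
    sandwich j.+1 (fun t b => F (mergearg mul l (insarg j.+1 (e t) b))) a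
  = \sum_(0 <= l < j) (-1) ^+ l.+1 *: homotopy j (mergearg mul l a).
  by apply: eq_big_nat => l hl; rewrite merge_term_lo //; lia.
rewrite lo_faces in h.
have hi_faces : \sum_(j.+2 <= l < m.+1) (-1) ^+ l.+1 *:
    sandwich j.+1 (fun t b => F (mergearg mul l (insarg j.+1 (e t) b))) a
  = - \sum_(j.+1 <= l < m) (-1) ^+ l.+1 *: homotopy j.+1 (mergearg mul l a).
  rewrite big_add1 -sumrN; apply: eq_big_nat => l hl.
  by rewrite merge_term_hi ?sign_scaleS //; lia.
rewrite hi_faces in h.
rewrite (sign_scaleS j.+1 (Fcut j.+2)) (sign_scaleS m.+1) in h.
by rewrite -[RHS]h /dlow /dhigh scalerBr opprD !addrA.
Qed.

Lemma relation_top : dlow m + (-1) ^+ m.+1 *: (Fcut m.+1 - Fcorner) = 0.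
Proof.
have h := cocycle_cut (leqnn m.+1).
rewrite left_termS right_term_top big_ord_recr in h.
have last_face : sandwich m.+1
    (fun t b => F (mergearg mul (@ord_max m) (insarg m.+1 (e t) b))) a = Fcut m.+1.
  exact: merge_term_left.
rewrite last_face in h.
have lo_faces : \sum_(l < m) (-1) ^+ (widen_ord (leqnSn m) l).+1 *:
    sandwich m.+1 (fun t b => F (mergearg mul (widen_ord (leqnSn m) l) (insarg m.+1 (e t) b))) a
  = \sum_(0 <= l < m) (-1) ^+ l.+1 *: homotopy m (mergearg mul l a).
  by rewrite big_mkord; apply: eq_bigr => l _; rewrite merge_term_lo //= ltnS ltn_ord.
rewrite lo_faces in h.
by rewrite -[RHS]h (sign_scaleS m.+1 Fcorner) /dlow scalerBr !addrA.
Qed.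

Lemma telescope_step (F0 Pk Pk2 Xk Xk1 Y : U) (c d : R) :
  (forall v : U, d *: (d *: v) = v) -> (forall v : U, d *: v = - (c *: v)) ->
  Y = Xk + d *: (Pk - Pk2) ->
  F0 - Pk + c *: Xk + d *: (Xk1 + Y) = F0 - Pk2 + d *: Xk1.
Proof.
move=> hdd hdc ->; rewrite scalerDr (scalerDr d Xk) hdd (hdc Xk) !addrA.
rewrite [F0 - Pk + c *: Xk + d *: Xk1]addrAC addrK.
by rewrite [F0 - Pk + d *: Xk1 + Pk]addrAC subrK addrAC.
Qed.

Lemma telescope_partial k : (k <= m)%N ->
  \sum_(j < k.+1) (-1) ^+ j *: hcobound mul lact ract m (homotopy j) a
  = F a - Fcut k.+1 + (-1) ^+ k *: dlow k.
Proof.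
elim: k => [|k IH] hk.
  rewrite big_ord1 hcobound_homotopy //.
  move/eqP: relation0; rewrite subr_eq0 => /eqP <-.
  by rewrite !expr0 !scale1r addrC.
rewrite big_ord_recr /= IH 1?ltnW // hcobound_homotopy //.
move/eqP: (relationS hk); rewrite subr_eq0 => /eqP hY.
apply: telescope_step => // v; [exact: sign_scaleK | exact: sign_scaleS].
Qed.

Lemma telescope :
  \sum_(j < m.+1) (-1) ^+ j *: hcobound mul lact ract m (homotopy j) a = F a.
Proof.
rewrite telescope_partial //.
move/eqP: relation_top; rewrite addr_eq0 => /eqP ->.
by rewrite sign_scaleS opprK sign_scaleK Fcorner0 subr0 subrK.
Qed.
End Contraction.

Lemma sum_in_M I (r : seq I) (c : I -> R) (v : I -> U) :
  (forall i, v i \in M) -> \sum_(i <- r) c i *: v i \in M.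
Proof. by move=> hv; elim/big_rec: _ => // i x _ hx; apply: M_lin. Qed.

Lemma hcobound_lincomb k N (c : 'I_N -> R) (f : 'I_N -> (nat -> T) -> U) b :
  hcobound mul lact ract k (fun x => \sum_j c j *: f j x) b
  = \sum_j c j *: hcobound mul lact ract k (f j) b.
Proof.
rewrite /hcobound; under [RHS]eq_bigr => j _ do rewrite !scalerDr.
rewrite !big_split /=; congr (_ + _ + _).
- by rewrite lact_sumr; apply: eq_bigr => j _; rewrite (linZ (lact_linr ^~ (b 0%N))).
- under eq_bigr => l _ do rewrite scaler_sumr.
  under [RHS]eq_bigr => j _ do rewrite scaler_sumr.
  rewrite exchange_big; apply: eq_bigr => j _; apply: eq_bigr => l _.
  by rewrite !scalerA mulrC.
- rewrite ract_suml scaler_sumr; apply: eq_bigr => j _.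
  by rewrite (linZ (fun r m m' => ract_linl r m m' (b k))) !scalerA mulrC.
Qed.

(* Degree 0: an invariant element m0 = sum_(t,u) e_u m0 e_t is zero. *)
Lemma triangular_HH_vanishes0 : HH_vanishes mul A M lact ract 0.
Proof.
move=> m0 hm hc; rewrite -(e_lact_sum hm); apply: big1 => t _.
rewrite hc // -(e_lact_sum (ract_in_M m0 (e t))); apply: big1 => u _.
case: (leqP u t) => hut; first exact: e_corner.
rewrite lact_ractC // hc // ract_mul // e_orth.
by case: eqP => [eut|_]; [move: hut; rewrite eut ltnn | exact: ract0].
Qed.

Lemma triangular_HH_vanishesS k : HH_vanishes mul A M lact ract k.+1.
Proof.
move=> F hF hZ; exists (fun b => \sum_(j < k.+1) (-1) ^+ j *: homotopy F j b); split.
  split.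
  - move=> b1 b2 h; apply: eq_bigr => j _; congr (_ *: _).
    by apply: (homotopy_dep hF); [rewrite -ltnS | exact: h].
  - by move=> b hb; apply: sum_in_M => j; exact: sandwich_in_M.
  - move=> b j x y r hj hb hx hy; rewrite scaler_sumr -big_split; apply: eq_bigr => l _.
    rewrite (homotopy_multilinear hF (ltn_ord l : (l <= k)%N) hj) //.
    by rewrite scalerDr !scalerA mulrC.
by move=> a ha; rewrite hcobound_lincomb telescope.
Qed.

Theorem triangular_HH_vanishes i : HH_vanishes mul A M lact ract i.
Proof. by case: i => [|k]; [exact: triangular_HH_vanishes0 | exact: triangular_HH_vanishesS]. Qed.
End TriangularHochschild.

Section Blocks.
Variable ns : seq nat.

Definition in_block (t i : nat) := (cum ns t <= i < cum ns t.+1)%N.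

Lemma cum_mono t u : (t <= u)%N -> (cum ns t <= cum ns u)%N.
Proof.
rewrite /cum; elim: ns t u => [|x s IH] [|t] [|u] //= htu.
by rewrite leq_add2l; apply: IH.
Qed.

Lemma in_block_uniq t u i : in_block t i -> in_block u i -> t = u.
Proof.
rewrite /in_block => /andP [h1 h2] /andP [h3 h4].
by case: (ltngtP t u) => // htu; have := cum_mono htu; lia.
Qed.

Lemma in_block_exists i : (i < sumn ns)%N -> exists2 t, (t < size ns)%N & in_block t i.
Proof.
rewrite /in_block /cum; elim: ns i => [|x s IH] i //= hi.
case: (ltnP i x) => hix; first by exists 0%N => //=; rewrite take0 /=; lia.
have [t ht ht2] := IH (i - x)%N ltac:(lia).
by exists t.+1 => //=; lia.
Qed.
End Blocks.

Section BlockMatrices.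
Variables (R : comPzRingType) (n : nat) (ns : seq nat).
Hypothesis ns_sum : sumn ns = n.

Definition block_idem (t : 'I_(size ns)) : 'M[R]_n :=
  \matrix_(i, j) ((i == j) && in_block ns t i)%:R.

Lemma block_of (i : 'I_n) : exists t : 'I_(size ns), in_block ns t i.
Proof.
have hi : (i < sumn ns)%N by rewrite ns_sum.
have [t ht hti] := in_block_exists hi.
by exists (Ordinal ht).
Qed.

Lemma blkzero_blocks (i j : 'I_n) (t u : 'I_(size ns)) :
  in_block ns t i -> in_block ns u j -> blkzero ns i j = (u < t)%N.
Proof.
move=> hti huj; apply/existsP/idP => [[t' /and3P [h1 h2 h3]] | hut].
  have ett : t' = t.
    by apply: val_inj; apply: (in_block_uniq _ hti); rewrite /in_block h1 h2.
  subst t'; case: (ltnP u t) => // htu; move: huj => /andP [h4 _].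
  by have := cum_mono ns htu; lia.
exists t; move: hti huj => /andP [-> ->] /andP [_ h] /=.
by have := cum_mono ns hut; lia.
Qed.

Lemma PnP (B : 'M[R]_n) : reflect (forall i j, blkzero ns i j -> B i j = 0) (B \in Pn ns).
Proof.
apply: (iffP forallP) => [hB i j hz | hB i]; last first.
  by apply/forallP => j; apply/implyP => /hB ->.
by move: (hB i) => /forallP/(_ j)/implyP/(_ hz)/eqP.
Qed.

Lemma QnP (B : 'M[R]_n) : reflect (forall i j, ~~ blkzero ns i j -> B i j = 0) (B \in Qn ns).
Proof.
apply: (iffP forallP) => [hB i j hz | hB i]; last first.
  by apply/forallP => j; apply/implyP => /hB ->.
by move: (hB i) => /forallP/(_ j)/implyP/(_ hz)/eqP.
Qed.

Lemma mul_block_idem_l t (x : 'M[R]_n) i j :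
  (block_idem t *m x) i j = if in_block ns t i then x i j else 0.
Proof.
rewrite mxE (bigD1 i) //= big1 ?addr0 => [|k hk]; last first.
  by rewrite mxE eq_sym (negbTE hk) mul0r.
by rewrite mxE eqxx; case: ifP; rewrite ?mul1r ?mul0r.
Qed.

Lemma mul_block_idem_r t (x : 'M[R]_n) i j :
  (x *m block_idem t) i j = if in_block ns t j then x i j else 0.
Proof.
rewrite mxE (bigD1 j) //= big1 ?addr0 => [|k hk]; last first.
  by rewrite mxE (negbTE hk) mulr0.
by rewrite mxE eqxx; case: ifP; rewrite ?mulr1 ?mulr0.
Qed.

(* P_n is a subalgebra: in a product of block upper triangular matrices,
   each term of an entry in the forced-zero region has a factor in it. *)
Lemma Pn_mul (x y : 'M[R]_n) : x \in Pn ns -> y \in Pn ns -> x *m y \in Pn ns.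
Proof.
move=> /PnP hx /PnP hy; apply/PnP => i j hz; rewrite mxE big1 // => k _.
have [t hti] := block_of i; have [u huj] := block_of j; have [w hwk] := block_of k.
move: hz; rewrite (blkzero_blocks hti huj) => hut.
case: (ltnP w t) => hwt; first by rewrite hx ?mul0r // (blkzero_blocks hti hwk).
by rewrite hy ?mulr0 // (blkzero_blocks hwk huj) (leq_trans hut hwt).
Qed.

Lemma Pn_lin r (x y : 'M[R]_n) : x \in Pn ns -> y \in Pn ns -> r *: x + y \in Pn ns.
Proof. by move=> /PnP hx /PnP hy; apply/PnP => i j hz; rewrite !mxE hx ?hy // mulr0 addr0. Qed.

Lemma Pn0 : (0 : 'M[R]_n) \in Pn ns.
Proof. by apply/PnP => i j _; rewrite mxE. Qed.

Lemma block_idem_Pn t : block_idem t \in Pn ns.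
Proof.
apply/PnP => i j hz; rewrite mxE; case: eqP => [eij|] //=; subst j.
by have [u hu] := block_of i; move: hz; rewrite (blkzero_blocks hu hu) ltnn.
Qed.

Lemma block_idem_orth t u :
  block_idem t *m block_idem u = if t == u then block_idem t else 0.
Proof.
apply/matrixP => i j; rewrite mul_block_idem_l; case: (t =P u) => [<-|htu]; rewrite !mxE.
  by case: (in_block ns t i); rewrite ?andbT ?andbF.
case: (boolP (in_block ns t i)) => ht //; case: (boolP (in_block ns u i)) => hu.
  by case: htu; apply: val_inj; apply: (in_block_uniq ht hu).
by rewrite andbF.
Qed.

Lemma sum_block_idem : \sum_t block_idem t = 1%:M.
Proof.
apply/matrixP => i j; rewrite summxE !mxE; case: (i =P j) => [<-|hij]; last first.
  by rewrite big1 // => t _; rewrite mxE; case: (i =P j).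
have [t0 h0] := block_of i; rewrite (bigD1 t0) //= big1 ?addr0 => [|u hu].
  by rewrite mxE eqxx h0.
rewrite mxE eqxx /=; case: (boolP (in_block ns u i)) => // h.
by case/eqP: hu; apply: val_inj; apply: (in_block_uniq h h0).
Qed.

Lemma block_idem_suml (x : 'M[R]_n) : \sum_t block_idem t *m x = x.
Proof. by rewrite -mulmx_suml sum_block_idem mul1mx. Qed.

Lemma block_idem_sumr (x : 'M[R]_n) : \sum_t x *m block_idem t = x.
Proof. by rewrite -mulmx_sumr sum_block_idem mulmx1. Qed.

Lemma block_idem_upper (x : 'M[R]_n) (u v : 'I_(size ns)) : x \in Pn ns -> (v < u)%N ->
  block_idem u *m x *m block_idem v = 0.
Proof.
move=> /PnP hx huv; apply/matrixP => i j; rewrite mul_block_idem_r mul_block_idem_l mxE.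
by case: ifP => hv //; case: ifP => hu //; rewrite hx // (blkzero_blocks hu hv).
Qed.

Lemma projQ_lin r (B C : 'M[R]_n) : projQ ns (r *: B + C) = r *: projQ ns B + projQ ns C.
Proof. by apply/matrixP => i j; rewrite !mxE; case: (blkzero ns i j); rewrite ?mulr0 ?addr0. Qed.

Lemma projQ_P (B : 'M[R]_n) : B \in Pn ns -> projQ ns B = 0.
Proof. by move=> /PnP hB; apply/matrixP => i j; rewrite !mxE; case: ifP => // /hB. Qed.

Lemma projQ_Qn (B : 'M[R]_n) : projQ ns B \in Qn ns.
Proof. by apply/QnP => i j hz; rewrite mxE (negbTE hz). Qed.

Lemma projQ_id (B : 'M[R]_n) : B \in Qn ns -> projQ ns B = B.
Proof. by move=> /QnP hB; apply/matrixP => i j; rewrite mxE; case: ifP => // /negbT /hB. Qed.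

(* The kernel of projQ is P_n, which is stable under multiplication by P_n,
   so the induced actions on Q_n are well defined. *)
Lemma projQ_compl (B : 'M[R]_n) : B - projQ ns B \in Pn ns.
Proof. by apply/PnP => i j hz; rewrite !mxE hz subrr. Qed.

Lemma projQ_mulPl (x z : 'M[R]_n) : x \in Pn ns -> projQ ns (x *m projQ ns z) = projQ ns (x *m z).
Proof.
move=> hx; rewrite -{2}(subrK (projQ ns z) z) mulmxDr (linD (projQ_lin)).
by rewrite (projQ_P (Pn_mul hx (projQ_compl z))) add0r.
Qed.

Lemma projQ_mulPr (z y : 'M[R]_n) : y \in Pn ns -> projQ ns (projQ ns z *m y) = projQ ns (z *m y).
Proof.
move=> hy; rewrite -{2}(subrK (projQ ns z) z) mulmxDl (linD (projQ_lin)).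
by rewrite (projQ_P (Pn_mul (projQ_compl z) hy)) add0r.
Qed.

Lemma Qn0 : (0 : 'M[R]_n) \in Qn ns.
Proof. by apply/QnP => i j _; rewrite mxE. Qed.

Lemma Qn_lin r (x y : 'M[R]_n) : x \in Qn ns -> y \in Qn ns -> r *: x + y \in Qn ns.
Proof. by move=> /QnP hx /QnP hy; apply/QnP => i j hz; rewrite !mxE hx ?hy // mulr0 addr0. Qed.

Lemma Qn_corner (m : 'M[R]_n) (t u : 'I_(size ns)) : (t <= u)%N ->
  lactQ ns (block_idem t) (ractQ ns m (block_idem u)) = 0.
Proof.
move=> htu; apply/matrixP => i j.
rewrite /lactQ /ractQ mxE mul_block_idem_l mxE mul_block_idem_r mxE.
case: (boolP (in_block ns t i)) => ht; case: (boolP (in_block ns u j)) => hu;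
  rewrite ?if_same //.
by rewrite (blkzero_blocks ht hu) ltnNge htu.
Qed.

Lemma lactQ_linl r (x y m : 'M[R]_n) :
  lactQ ns (r *: x + y) m = r *: lactQ ns x m + lactQ ns y m.
Proof. by rewrite /lactQ mulmxDl -scalemxAl projQ_lin. Qed.

Lemma lactQ_linr r (x m m' : 'M[R]_n) :
  lactQ ns x (r *: m + m') = r *: lactQ ns x m + lactQ ns x m'.
Proof. by rewrite /lactQ mulmxDr -scalemxAr projQ_lin. Qed.

Lemma ractQ_linl r (m m' x : 'M[R]_n) :
  ractQ ns (r *: m + m') x = r *: ractQ ns m x + ractQ ns m' x.
Proof. by rewrite /ractQ mulmxDl -scalemxAl projQ_lin. Qed.

Lemma ractQ_linr r (m x y : 'M[R]_n) :
  ractQ ns m (r *: x + y) = r *: ractQ ns m x + ractQ ns m y.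
Proof. by rewrite /ractQ mulmxDr -scalemxAr projQ_lin. Qed.

Lemma lactQ_mul (x y m : 'M[R]_n) : x \in Pn ns -> lactQ ns x (lactQ ns y m) = lactQ ns (x *m y) m.
Proof. by move=> hx; rewrite /lactQ projQ_mulPl // mulmxA. Qed.

Lemma ractQ_mul (m x y : 'M[R]_n) : y \in Pn ns -> ractQ ns (ractQ ns m x) y = ractQ ns m (x *m y).
Proof. by move=> hy; rewrite /ractQ projQ_mulPr // mulmxA. Qed.

Lemma lactQ_ractC (x m y : 'M[R]_n) : x \in Pn ns -> y \in Pn ns ->
  lactQ ns x (ractQ ns m y) = ractQ ns (lactQ ns x m) y.
Proof. by move=> hx hy; rewrite /lactQ /ractQ projQ_mulPl // projQ_mulPr // mulmxA. Qed.

Lemma block_idem_lactQ_sum (m : 'M[R]_n) : m \in Qn ns -> \sum_t lactQ ns (block_idem t) m = m.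
Proof.
move=> hm; rewrite /lactQ -(lin_sum projQ_lin) -mulmx_suml sum_block_idem mul1mx.
exact: projQ_id.
Qed.
End BlockMatrices.

Theorem proposition4p15 (R : comPzRingType) (n : nat) (ns : seq nat)
  (Hpos : all (fun k => (0 < k)%N) ns) (Hsum : sumn ns = n) (i : nat) :
  HH_vanishes (@mulmx R n n n) (@Pn R n ns) (@Qn R n ns)
    (@lactQ R n ns) (@ractQ R n ns) i.
Proof.
apply: (triangular_HH_vanishes (e := @block_idem R n ns)).
- by move=> r x y z; rewrite mulmxDl -scalemxAl.
- by move=> r x y z; rewrite mulmxDr -scalemxAr.
- by move=> x y z; rewrite mulmxA.
- exact: Pn_mul.
- exact: Pn_lin.
- exact: Pn0.
- exact: block_idem_Pn.
- exact: block_idem_orth.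
- exact: block_idem_suml.
- exact: block_idem_sumr.
- exact: block_idem_upper.
- exact: lactQ_linl.
- exact: lactQ_linr.
- exact: ractQ_linl.
- exact: ractQ_linr.
- exact: lactQ_mul.
- exact: ractQ_mul.
- exact: lactQ_ractC.
- by move=> *; exact: projQ_Qn.
- by move=> *; exact: projQ_Qn.
- exact: Qn0.
- exact: Qn_lin.
- exact: block_idem_lactQ_sum.
- by move=> m t u _; exact: Qn_corner.
Qed.
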